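(* Let $C$ be the closed disk with center $(a,b)$ and radius $r>0$; for $i\in\mathbb{N}$ let $C_i$ be the closed disk with center $(ia,ib)$ and radius $ir$; let $\mathcal{S}=\bigcup_{i\geq0}C_i\cap\mathbb{N}^2$, and let $\tau_1,\tau_2$ be the extremal rays of $L_{\mathbb{Q}_{\geq}}(C\cap\mathbb{R}^2_{\geq})$. Then every $X=(x,y)\in\mathcal{S}\setminus(\tau_1\cup\tau_2)$ satisfies $$\frac{1}{2}\left(\frac{(a,b)\cdot(x,y)}{\sqrt{(\mathrm{d}(X)r)^2-[(b,-a)\cdot(x,y)]^2}}+1\right)\mathrm{d}(X)\ \bmod\ \frac{\mathrm{d}(X)\left(\mathrm{d}((a,b))^2-r^2\right)}{2\sqrt{(\mathrm{d}(X)r)^2-[(b,-a)\cdot(x,y)]^2}}\ \le\ \mathrm{d}(X).$$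
   Context: $\mathbb{N}=\{0,1,2,\dots\}$. For $A\subseteq\mathbb{R}^2_{\geq}$, $L_{\mathbb{Q}_{\geq}}(A)=\{\sum_{i=1}^p q_ia_i\mid p\in\mathbb{N},\ q_i\in\mathbb{Q}_{\geq},\ a_i\in A\}$ and its extremal rays are its two boundary half-lines from the origin. $\mathrm{d}(X)$ is the Euclidean norm of $X$; $\cdot$ is the standard dot product. For real $u$ and $v>0$, $u\bmod v=u-v\lfloor u/v\rfloor$. *)

From HB Require Import structures.
From mathcomp Require Import all_boot all_order all_algebra.
From mathcomp Require Import all_classical all_reals all_analysis.
Set Implicit Arguments. Unset Strict Implicit. Unset Printing Implicit Defensive.
Import Order.TTheory GRing.Theory Num.Theory numFieldNormedType.Exports.
Local Open Scope classical_set_scope.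
Local Open Scope ring_scope.

Section Defs.
Variable R : realType.

Definition dnorm (p : R * R) : R := Num.sqrt (p.1 ^+ 2 + p.2 ^+ 2).

Definition dot (p q : R * R) : R := p.1 * q.1 + p.2 * q.2.

Definition rmod (u v : R) : R := u - v * (Num.floor (u / v))%:~R.

Definition cdisk (c : R * R) (rho : R) : set (R * R) :=
  [set p | (p.1 - c.1) ^+ 2 + (p.2 - c.2) ^+ 2 <= rho ^+ 2].

Definition quadrant : set (R * R) := [set p | 0 <= p.1 /\ 0 <= p.2].

Definition ratcone (A : set (R * R)) : set (R * R) :=
  [set v | exists (p : nat) (q : 'I_p -> rat) (pts : 'I_p -> R * R),
      (forall i, 0 <= q i) /\ (forall i, A (pts i)) /\
      v = (\sum_(i < p) ratr (q i) * (pts i).1, \sum_(i < p) ratr (q i) * (pts i).2)].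

Definition halfline (u : R * R) : set (R * R) :=
  [set p | exists t : R, 0 <= t /\ p = (t * u.1, t * u.2)].

(* boundary half-lines from the origin of a cone K (its extremal rays):
   half-lines contained in the topological boundary closure K \ interior K *)
Definition extremal_ray (K : set (R * R)) (rho : set (R * R)) : Prop :=
  exists u : R * R, u != (0, 0) /\ rho = halfline u /\
    rho `<=` closure K /\ rho `&` interior K = set0.

Definition circle_semigroup (a b r : R) : set (nat * nat) :=
  [set X | exists i : nat,
      cdisk (i%:R * a, i%:R * b) (i%:R * r) (X.1%:R, X.2%:R)].
End Defs.

From HB Require Import structures.
From mathcomp Require Import all_boot all_order all_algebra.
From mathcomp Require Import all_classical all_reals all_analysis.
From mathcomp Require Import ring lra.
Import Order.TTheory GRing.Theory Num.Theory numFieldNormedType.Exports.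
Local Open Scope classical_set_scope.
Local Open Scope ring_scope.

(* With p = (a,b).X, K = d((a,b))^2 - r^2 and s the square root in the
   statement, the identity s^2 - (p - iK)^2 = K (i^2 r^2 - d(X - i(a,b))^2)
   shows that X lies in C_i exactly when |p - iK| <= s.  Hence i <= (p + s)/K,
   which is the quotient u/v of the two arguments of mod, so u mod v is at most
   u - i v = d(X) (p + s - iK)/(2s) <= d(X). *)

Lemma dnorm_sqr {R : realType} (p : R * R) : dnorm p ^+ 2 = p.1 ^+ 2 + p.2 ^+ 2.
Proof. by rewrite /dnorm sqr_sqrtr // addr_ge0 // sqr_ge0. Qed.

Lemma dnorm_ge0 {R : realType} (p : R * R) : 0 <= dnorm p.
Proof. exact: sqrtr_ge0. Qed.

Lemma rmod0 {R : realType} (u : R) : rmod u 0 = u.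
Proof. by rewrite /rmod mul0r subr0. Qed.

Lemma rmod_le_sub {R : realType} (u v : R) (n : int) :
  0 < v -> n%:~R <= u / v -> rmod u v <= u - v * n%:~R.
Proof.
move=> v0 nle; rewrite /rmod lerD2l lerN2 ler_pM2l // ler_int.
by rewrite floor_ge_int.
Qed.

Lemma scaled_disk_identity {R : comPzRingType} (a b r x y t : R) :
  let K := a ^+ 2 + b ^+ 2 - r ^+ 2 in
  ((x ^+ 2 + y ^+ 2) * r ^+ 2 - (b * x - a * y) ^+ 2)
    - (a * x + b * y - t * K) ^+ 2
  = K * ((t * r) ^+ 2 - ((x - t * a) ^+ 2 + (y - t * b) ^+ 2)).
Proof. by rewrite /=; ring. Qed.

Lemma scaled_disk_dot_bound {R : realType} {a b r x y t : R} :
  r ^+ 2 < a ^+ 2 + b ^+ 2 ->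
  (x - t * a) ^+ 2 + (y - t * b) ^+ 2 <= (t * r) ^+ 2 ->
  (a * x + b * y - t * (a ^+ 2 + b ^+ 2 - r ^+ 2)) ^+ 2
    <= (x ^+ 2 + y ^+ 2) * r ^+ 2 - (b * x - a * y) ^+ 2.
Proof.
move=> rab inC; rewrite -subr_ge0 scaled_disk_identity.
by apply: mulr_ge0; rewrite subr_ge0 // ltW.
Qed.

Lemma rmod_chord_le {R : realType} (p s K d : R) (i : nat) :
  0 < s -> 0 < K -> 0 < d -> `|p - i%:R * K| <= s ->
  rmod (2^-1 * (p / s + 1) * d) (d * K / (2 * s)) <= d.
Proof.
move=> s0 K0 d0; rewrite ler_norml => /andP [lo hi].
have v0 : 0 < d * K / (2 * s) by rewrite divr_gt0 ?mulr_gt0.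
have quotE : 2^-1 * (p / s + 1) * d / (d * K / (2 * s)) = (p + s) / K.
  by field; rewrite !gt_eqF.
apply: (le_trans (rmod_le_sub _ _ i%:Z v0 _)).
  by rewrite quotE ler_pdivlMr //; lra.
have -> : 2^-1 * (p / s + 1) * d - d * K / (2 * s) * (i%:Z)%:~R
          = d * ((p + s - i%:R * K) / (2 * s)).
  by field; rewrite gt_eqF.
by rewrite -[leRHS]mulr1 ler_pM2l // ler_pdivrMr ?mulr_gt0 //; lra.
Qed.

Theorem corollary4p6 (R : realType) (a b r : R) :
  0 < r -> r < dnorm (a, b) ->
  forall x y : nat,
    circle_semigroup a b r (x, y) ->
    ~ (exists tau, extremal_ray (ratcone (cdisk (a, b) r `&` @quadrant R)) tau
                   /\ tau (x%:R, y%:R)) ->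
    let X : R * R := (x%:R, y%:R) in
    let s := Num.sqrt ((dnorm X * r) ^+ 2 - (dot (b, - a) X) ^+ 2) in
    rmod (2^-1 * (dot (a, b) X / s + 1) * dnorm X)
         (dnorm X * (dnorm (a, b) ^+ 2 - r ^+ 2) / (2 * s))
    <= dnorm X.
Proof.
move=> r0 rab x y [i inCi] _; cbv zeta.
set X : R * R := (x%:R, y%:R); set s := Num.sqrt _.
have rab2 : r ^+ 2 < a ^+ 2 + b ^+ 2.
  by have := dnorm_sqr (a, b); rewrite /= => <-; nra.
have sE : s = Num.sqrt ((x%:R ^+ 2 + y%:R ^+ 2) * r ^+ 2 - (b * x%:R - a * y%:R) ^+ 2).
  by rewrite /s exprMn (dnorm_sqr X) /dot /= mulNr.
have d_ge0 := dnorm_ge0 X.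
have [s0 | s_neq0] := eqVneq s 0.
  by rewrite s0 mulr0 invr0 !mulr0 rmod0 add0r mulr1; lra.
have s_gt0 : 0 < s by rewrite lt0r s_neq0 sqrtr_ge0.
have d_gt0 : 0 < dnorm X.
  rewrite lt0r d_ge0 andbT; apply: contra_neq s_neq0 => d0.
  by rewrite /s d0 mul0r expr0n /= sub0r ler0_sqrtr // oppr_le0 sqr_ge0.
have bound := scaled_disk_dot_bound rab2 inCi; rewrite /= in bound.
rewrite (dnorm_sqr (a, b)) /dot /=.
apply: (@rmod_chord_le _ _ _ _ _ i) => //; first by rewrite subr_gt0.
by rewrite -sqrtr_sqr sE ler_sqrt // (le_trans (sqr_ge0 _) bound).
Qed.
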